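(* Let $p$ be even, let $\mathcal{C}_0$ be a fixed two-sided $p$-periodic CMV matrix, and let $1\le q\le\infty$. There is a constant $C$ such that for any sequence of Verblunsky coefficients $\alpha=\{\alpha_n\}$, $$e^{-p}\bigl\|\tilde d_m(\alpha,\mathcal{T}_{\mathcal{C}_0})\bigr\|_{\ell^q}\le\bigl\|d_m(\alpha,\mathcal{T}_{\mathcal{C}_0})\bigr\|_{\ell^q}\le C\bigl\|\tilde d_m(\alpha,\mathcal{T}_{\mathcal{C}_0})\bigr\|_{\ell^q}.$$
   Context: Verblunsky coefficients are complex numbers $\alpha_n\in\mathbb{D}$. For $\alpha\in\mathbb{D}$, $\rho=(1-|\alpha|^2)^{1/2}$. A two-sided $p$-periodic CMV matrix $\mathcal{C}_0$ is determined by a $p$-periodic sequence $\{\alpha^{(0)}_n\}_{n\in\mathbb{Z}}\subset\mathbb{D}$; its discriminant is $\Delta_{\mathcal{C}_0}(z)=\mathrm{Tr}(z^{-p/2}M_{p-1}(z)\cdots M_0(z))$ with $M_n(z)=(\rho^{(0)}_n)^{-1}\begin{pmatrix}z&-\bar\alpha^{(0)}_n\\-\alpha^{(0)}_nz&1\end{pmatrix}$, and the isospectral torus $\mathcal{T}_{\mathcal{C}_0}$ is the set of $p$-periodic sequences in $\mathbb{D}$ with the same discriminant. $d_m(\alpha,\alpha')=\sum_{k=0}^\infty e^{-k}|\alpha_{m+k}-\alpha'_{m+k}|$ and $\tilde d_m(\alpha,\alpha')=\sum_{k=0}^{p}|\alpha_{m+k}-\alpha'_{m+k}|$; distances to $\mathcal{T}_{\mathcal{C}_0}$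 are infima over $\alpha'\in\mathcal{T}_{\mathcal{C}_0}$. The $\ell^q$ norms are over $m$. *)

From Stdlib Require Import Reals ZArith Lra.
From Coquelicot Require Import Coquelicot.
Open Scope R_scope.

Fixpoint Cpown (z : C) (n : nat) : C :=
  match n with O => RtoC 1 | S k => Cmult z (Cpown z k) end.

Definition rho (a : C) : R := sqrt (1 - (Cmod a) ^ 2).

Record M2 := mkM2 { m11 : C; m12 : C; m21 : C; m22 : C }.

Definition M2mul (A B : M2) : M2 :=
  mkM2 (Cplus (Cmult (m11 A) (m11 B)) (Cmult (m12 A) (m21 B)))
       (Cplus (Cmult (m11 A) (m12 B)) (Cmult (m12 A) (m22 B)))
       (Cplus (Cmult (m21 A) (m11 B)) (Cmult (m22 A) (m21 B)))
       (Cplus (Cmult (m21 A) (m12 B)) (Cmult (m22 A) (m22 B))).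

Definition M2id : M2 := mkM2 (RtoC 1) (RtoC 0) (RtoC 0) (RtoC 1).

Definition M2trace (A : M2) : C := Cplus (m11 A) (m22 A).

Definition Mtrans (a z : C) : M2 :=
  let c := RtoC (/ rho a) in
  mkM2 (Cmult c z) (Cmult c (Copp (Cconj a)))
       (Cmult c (Copp (Cmult a z))) c.

Fixpoint transfer (alpha : Z -> C) (z : C) (k : nat) : M2 :=
  match k with
  | O => M2id
  | S j => M2mul (Mtrans (alpha (Z.of_nat j)) z) (transfer alpha z j)
  end.

Definition discriminant (p : nat) (alpha : Z -> C) (z : C) : C :=
  Cmult (Cpown (Cinv z) (Nat.div p 2)) (M2trace (transfer alpha z p)).

Definition in_disk (a : C) : Prop := Cmod a < 1.

Definition periodic (p : nat) (alpha : Z -> C) : Prop :=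
  forall n : Z, alpha (n + Z.of_nat p)%Z = alpha n.

Definition iso_torus (p : nat) (alpha0 : Z -> C) (beta : Z -> C) : Prop :=
  periodic p beta /\ (forall n, in_disk (beta n)) /\
  (forall z : C, z <> RtoC 0 -> discriminant p beta z = discriminant p alpha0 z).

Definition dm (alpha : nat -> C) (beta : Z -> C) (m : nat) : R :=
  Series (fun k => exp (- INR k) * Cmod (Cminus (alpha (m + k)%nat) (beta (Z.of_nat (m + k))))).

Definition dtm (p : nat) (alpha : nat -> C) (beta : Z -> C) (m : nat) : R :=
  sum_f_R0 (fun k => Cmod (Cminus (alpha (m + k)%nat) (beta (Z.of_nat (m + k))))) p.

(* distances to the torus: infima over the torus (finite: torus nonempty,
   distances nonnegative) *)
Definition dm_torus (p : nat) (alpha0 : Z -> C) (alpha : nat -> C) (m : nat) : R :=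
  real (Glb_Rbar (fun x => exists beta, iso_torus p alpha0 beta /\ x = dm alpha beta m)).

Definition dtm_torus (p : nat) (alpha0 : Z -> C) (alpha : nat -> C) (m : nat) : R :=
  real (Glb_Rbar (fun x => exists beta, iso_torus p alpha0 beta /\ x = dtm p alpha beta m)).

Definition rpow (x r : R) : R := if Rle_dec x 0 then 0 else Rpower x r.

Definition Rbar_rpow (y : Rbar) (r : R) : Rbar :=
  match y with Finite x => Finite (rpow x r) | p_infty => p_infty | m_infty => m_infty end.

Definition lq_norm (q : Rbar) (x : nat -> R) : Rbar :=
  match q with
  | Finite r => Rbar_rpow (Lim_seq (fun N => sum_f_R0 (fun m => rpow (x m) r) N)) (/ r)
  | p_infty => Lub_Rbar (fun y => exists m, y = x m)
  | m_infty => m_infty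
  end.

(* Lower bound: for every alpha', the first p + 1 terms of d_m(alpha, alpha') carry weights
   e^{-k} >= e^{-p}.
   Upper bound: pick for every i a beta_i on the torus with tilde d_i(alpha, beta_i) almost
   minimal.  beta_i and beta_{i+1} are p-periodic and both close to alpha on the p sites
   i+1, ..., i+p, which meet every residue class mod p; so |beta_i - beta_{i+1}| is
   everywhere at most tilde d_i + tilde d_{i+1}, and chaining gives
   |alpha_{m+k} - beta_m(m+k)| <= 2 sum_{j<=k} tilde d_{m+j}.  Splitting e^{-k} = w^k w^k with
   w = e^{-1/2} yields d_m <= 2/(1-w) sum_j w^j tilde d_{m+j}, and this one-sided geometric
   average is bounded on l^q (Hoelder with the weights sqrt(w)^j).
   Neither the parity of p nor the discriminant plays a role: the estimates hold for any set
   of p-periodic sequences in the disk that contains alpha0. *)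

From Stdlib Require Import Reals ZArith Lra Lia IndefiniteDescription Classical.
From Coquelicot Require Import Coquelicot.
Open Scope R_scope.

Lemma exp_le_exp (x y : R) : x <= y -> exp x <= exp y.
Proof. intros [H|H]; [left; now apply exp_increasing | now rewrite H]. Qed.

Lemma rpow_Rpower (x r : R) : 0 < x -> rpow x r = Rpower x r.
Proof. intros Hx; unfold rpow; destruct (Rle_dec x 0); [lra | reflexivity]. Qed.

Lemma rpow_0 (r : R) : rpow 0 r = 0.
Proof. unfold rpow; destruct (Rle_dec 0 0); [reflexivity | lra]. Qed.

Lemma rpow_ge0 (x r : R) : 0 <= rpow x r.
Proof.
  unfold rpow; destruct (Rle_dec x 0); [lra|].
  left; apply exp_pos.
Qed.

Lemma rpow_gt0 (x r : R) : 0 < x -> 0 < rpow x r.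
Proof. intros Hx; rewrite rpow_Rpower by exact Hx; apply exp_pos. Qed.

Lemma rpow_le (x y r : R) : 0 < r -> 0 <= x <= y -> rpow x r <= rpow y r.
Proof.
  intros Hr [Hx Hxy]. destruct (Req_dec x 0) as [->|Hx0].
  - rewrite rpow_0; apply rpow_ge0.
  - rewrite !rpow_Rpower by lra; apply Rle_Rpower_l; lra.
Qed.

Lemma rpow_mult_distr (x y r : R) : 0 <= x -> 0 <= y ->
  rpow (x * y) r = rpow x r * rpow y r.
Proof.
  intros Hx Hy.
  destruct (Req_dec x 0) as [->|Hx0]; [rewrite Rmult_0_l, !rpow_0; ring|].
  destruct (Req_dec y 0) as [->|Hy0]; [rewrite Rmult_0_r, !rpow_0; ring|].
  rewrite !rpow_Rpower by nra; symmetry; apply Rpower_mult_distr; lra.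
Qed.

Lemma rpow_rpow_inv (x r : R) : 0 < r -> 0 <= x -> rpow (rpow x r) (/ r) = x.
Proof.
  intros Hr Hx. destruct (Req_dec x 0) as [->|Hx0]; [now rewrite !rpow_0|].
  rewrite (rpow_Rpower x), rpow_Rpower by (try apply exp_pos; lra).
  rewrite Rpower_mult, Rinv_r by lra; apply Rpower_1; lra.
Qed.

Lemma rpow_inv_rpow (x r : R) : 0 < r -> 0 <= x -> rpow (rpow x (/ r)) r = x.
Proof.
  intros Hr Hx. rewrite <- (Rinv_inv r) at 2.
  apply rpow_rpow_inv; [apply Rinv_0_lt_compat|]; assumption.
Qed.

Lemma rpow_le_self (x r : R) : 0 <= x <= 1 -> 1 <= r -> rpow x r <= x.
Proof.
  intros Hx Hr. destruct (Req_dec x 0) as [->|Hx0]; [rewrite rpow_0; lra|].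
  rewrite rpow_Rpower by lra. unfold Rpower.
  assert (Hln : ln x <= 0).
  { destruct (Req_dec x 1) as [->|]; [rewrite ln_1; lra|].
    left; rewrite <- ln_1; apply ln_increasing; lra. }
  rewrite <- (exp_ln x) at 2 by lra. apply exp_le_exp; nra.
Qed.

Lemma Rbar_le_p_infty (x : Rbar) : Rbar_le x p_infty.
Proof. now destruct x. Qed.

Lemma Rbar_mult_infty_pos (c : R) :
  0 < c -> Rbar_mult c p_infty = p_infty /\ Rbar_mult c m_infty = m_infty.
Proof.
  intros Hc; cbn; destruct (Rle_dec 0 c) as [H|]; [|lra].
  destruct (Rle_lt_or_eq_dec 0 c H); [split; reflexivity | lra].
Qed.

Lemma Rbar_mult_assoc_pos (a b : R) (x : Rbar) : 0 < a -> 0 < b ->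
  Rbar_mult a (Rbar_mult b x) = Rbar_mult (a * b) x.
Proof.
  intros Ha Hb.
  destruct (Rbar_mult_infty_pos a Ha) as [Hap Ham].
  destruct (Rbar_mult_infty_pos b Hb) as [Hbp Hbm].
  destruct (Rbar_mult_infty_pos (a * b) ltac:(nra)) as [Hp Hm].
  destruct x as [x| |].
  - cbn; f_equal; ring.
  - now rewrite Hbp, Hap, Hp.
  - now rewrite Hbm, Ham, Hm.
Qed.

Lemma Rbar_mult_le_compat_l_pos (c : R) (x y : Rbar) : 0 < c ->
  Rbar_le x y -> Rbar_le (Rbar_mult c x) (Rbar_mult c y).
Proof.
  intros Hc Hxy. destruct (Rbar_mult_infty_pos c Hc) as [Hp Hm].
  destruct x as [x| |], y as [y| |]; cbn in Hxy; try contradiction;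
    rewrite ?Hp, ?Hm; cbn; auto.
  apply Rmult_le_compat_l; lra.
Qed.

Lemma Rbar_rpow_le (x y : Rbar) (r : R) : 0 < r -> Rbar_le 0 x -> Rbar_le x y ->
  Rbar_le (Rbar_rpow x r) (Rbar_rpow y r).
Proof.
  intros Hr Hx Hxy.
  destruct x as [x| |], y as [y| |]; cbn in *; try contradiction; auto.
  apply rpow_le; lra.
Qed.

Lemma Rbar_rpow_scal (c r : R) (L : Rbar) : 0 < c -> 0 < r -> Rbar_le 0 L ->
  Rbar_rpow (Rbar_mult (rpow c r) L) (/ r) = Rbar_mult c (Rbar_rpow L (/ r)).
Proof.
  intros Hc Hr HL. assert (Hcr := rpow_gt0 c r Hc).
  destruct L as [L| |]; cbn in HL; try contradiction.
  - cbn. rewrite rpow_mult_distr, rpow_rpow_inv by (try apply rpow_ge0; lra).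
    reflexivity.
  - rewrite (proj1 (Rbar_mult_infty_pos _ Hcr)); cbn [Rbar_rpow].
    now rewrite (proj1 (Rbar_mult_infty_pos _ Hc)).
Qed.

Lemma Lub_Rbar_range (x : nat -> R) :
  Lub_Rbar (fun z => exists m, z = x m) = Sup_seq (fun m => x m).
Proof.
  rewrite Rbar_sup_eq_lub. symmetry. apply Rbar_is_lub_unique.
  destruct (Lub_Rbar_correct (fun z => exists m, z = x m)) as [Hub Hleast]. split.
  - intros z [m ->]. apply Hub. now exists m.
  - intros b Hb. apply Hleast. intros z [m ->]. apply Hb. now exists m.
Qed.

Lemma Sup_seq_le_ub (u : nat -> Rbar) (b : R) :
  (forall n, Rbar_le (u n) b) -> Rbar_le (Sup_seq u) b.
Proof.
  intros Hu. apply Rbar_not_lt_le. intros [n Hn]%Sup_seq_minor_lt.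
  specialize (Hu n). destruct (u n); cbn in *; auto; lra.
Qed.

Definition power_sum (r : R) (x : nat -> R) (N : nat) : R :=
  sum_f_R0 (fun m => rpow (x m) r) N.

Lemma lq_norm_finite (r : R) (x : nat -> R) :
  lq_norm (Finite r) x = Rbar_rpow (Lim_seq (power_sum r x)) (/ r).
Proof. reflexivity. Qed.

Lemma lq_norm_p_infty (x : nat -> R) : lq_norm p_infty x = Sup_seq (fun m => x m).
Proof. apply Lub_Rbar_range. Qed.

Lemma power_sum_incr (r : R) (x : nat -> R) (N : nat) :
  power_sum r x N <= power_sum r x (S N).
Proof. unfold power_sum; cbn; pose proof (rpow_ge0 (x (S N)) r); lra. Qed.

Lemma Lim_power_sum_ge0 (r : R) (x : nat -> R) : Rbar_le 0 (Lim_seq (power_sum r x)).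
Proof.
  rewrite <- (Lim_seq_const 0). apply Lim_seq_le_loc. exists 0%nat; intros N _.
  apply cond_pos_sum; intros; apply rpow_ge0.
Qed.

Lemma power_sum_le_Lim (r T : R) (x : nat -> R) (N : nat) :
  Lim_seq (power_sum r x) = Finite T -> power_sum r x N <= T.
Proof.
  intros HT. apply is_lim_seq_incr_compare; [|apply power_sum_incr].
  rewrite <- HT. apply Lim_seq_correct, ex_lim_seq_incr, power_sum_incr.
Qed.

Section LqNorm.

Variable q : Rbar.
Hypothesis Hq : Rbar_le 1 q.

Lemma lq_norm_le (x y : nat -> R) : (forall m, 0 <= x m <= y m) ->
  Rbar_le (lq_norm q x) (lq_norm q y).
Proof.
  intros Hxy. destruct q as [r| |]; cbn in Hq; try contradiction.
  - rewrite !lq_norm_finite.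
    apply Rbar_rpow_le; [apply Rinv_0_lt_compat; lra | apply Lim_power_sum_ge0 |].
    apply Lim_seq_le_loc. exists 0%nat; intros N _. apply sum_Rle; intros m _.
    apply rpow_le; [lra | apply Hxy].
  - rewrite !lq_norm_p_infty. apply Sup_seq_le. intros m; apply Hxy.
Qed.

Lemma lq_norm_scal (c : R) (x : nat -> R) : 0 < c -> (forall m, 0 <= x m) ->
  lq_norm q (fun m => c * x m) = Rbar_mult c (lq_norm q x).
Proof.
  intros Hc Hx. destruct q as [r| |]; cbn in Hq; try contradiction.
  - rewrite !lq_norm_finite, <- Rbar_rpow_scal by (try apply Lim_power_sum_ge0; lra).
    rewrite <- Lim_seq_scal_l. f_equal. apply Lim_seq_ext. intros N.
    unfold power_sum. rewrite scal_sum. apply sum_eq. intros m _.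
    rewrite rpow_mult_distr by (auto; lra). ring.
  - rewrite !lq_norm_p_infty, <- Sup_seq_scal_l by lra. reflexivity.
Qed.

End LqNorm.

Lemma sum_f_R0_term_le (f : nat -> R) (k N : nat) :
  (forall n, 0 <= f n) -> (k <= N)%nat -> f k <= sum_f_R0 f N.
Proof.
  intros Hf HkN. induction N as [|N IH].
  - replace k with 0%nat by lia; cbn; lra.
  - cbn. destruct (Nat.eq_dec k (S N)) as [->|Hk].
    + pose proof (cond_pos_sum f N Hf); lra.
    + specialize (IH ltac:(lia)); specialize (Hf (S N)); lra.
Qed.

Lemma sum_f_R0_scal_l (f : nat -> R) (c : R) (N : nat) :
  sum_f_R0 (fun n => c * f n) N = c * sum_f_R0 f N.
Proof. rewrite scal_sum. apply sum_eq. intros; ring. Qed.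

Lemma sum_f_R0_shift_le (f : nat -> R) (i N : nat) : (forall n, 0 <= f n) ->
  sum_f_R0 (fun m => f (m + i)%nat) N <= sum_f_R0 f (N + i).
Proof.
  intros Hf. induction N as [|N IH]; cbn.
  - now apply sum_f_R0_term_le.
  - replace (S (N + i)) with (S N + i)%nat by lia. cbn; lra.
Qed.

Lemma sum_f_R0_le_Series (a : nat -> R) (N : nat) : ex_series a -> (forall n, 0 <= a n) ->
  sum_f_R0 a N <= Series a.
Proof.
  intros Ha Hpos. apply sum_incr; [|exact Hpos].
  apply is_series_Reals, Series_correct, Ha.
Qed.

Lemma term_le_Series (a : nat -> R) (k : nat) : ex_series a -> (forall n, 0 <= a n) ->
  a k <= Series a.
Proof.
  intros Ha Hpos. apply Rle_trans with (sum_f_R0 a k).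
  - now apply sum_f_R0_term_le.
  - now apply sum_f_R0_le_Series.
Qed.

Lemma Series_ge0 (a : nat -> R) : ex_series a -> (forall n, 0 <= a n) -> 0 <= Series a.
Proof.
  intros Ha Hpos. apply Rle_trans with (sum_f_R0 a 0); [apply Hpos|].
  now apply sum_f_R0_le_Series.
Qed.

Lemma ex_series_geom (q : R) : 0 <= q < 1 -> ex_series (fun n => q ^ n).
Proof. intros Hq. eexists. apply is_series_geom. rewrite Rabs_pos_eq; lra. Qed.

Lemma Series_geom_pos (q : R) : 0 <= q < 1 -> Series (fun n => q ^ n) = / (1 - q).
Proof. intros Hq. apply Series_geom. rewrite Rabs_pos_eq; lra. Qed.

Lemma ex_series_geom_bound (a : nat -> R) (q B : R) : 0 <= q < 1 ->
  (forall n, 0 <= a n <= B * q ^ n) -> ex_series a.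
Proof.
  intros Hq Ha. apply (@ex_series_le R_AbsRing R_CompleteNormedModule _ (fun n => B * q ^ n)).
  - intros n. change (Rabs (a n) <= B * q ^ n). rewrite Rabs_pos_eq; apply Ha.
  - apply (ex_series_scal_l B (fun n => q ^ n)), ex_series_geom, Hq.
Qed.

Lemma Series_sum_f_R0_comm (g : nat -> nat -> R) (N : nat) : (forall m, ex_series (g m)) ->
  ex_series (fun i => sum_f_R0 (fun m => g m i) N) /\
  Series (fun i => sum_f_R0 (fun m => g m i) N) = sum_f_R0 (fun m => Series (g m)) N.
Proof.
  intros Hg. induction N as [|N [Hex HS]]; cbn; [split; [apply Hg | reflexivity]|].
  split.
  - apply (@ex_series_plus R_AbsRing R_NormedModule _ _ Hex (Hg (S N))).
  - rewrite Series_plus by auto. now rewrite HS.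
Qed.

Definition geom_tail (w : R) (t : nat -> R) (m : nat) : R :=
  Series (fun j => w ^ j * t (m + j)%nat).

Section GeomTail.

Variable w : R.
Hypothesis Hw : 0 <= w < 1.

Lemma pow_bounds (n : nat) : 0 <= w ^ n <= 1.
Proof. split; [apply pow_le; lra | rewrite <- (pow1 n); apply pow_incr; lra]. Qed.

Lemma pow_decr (j k : nat) : (j <= k)%nat -> w ^ k <= w ^ j.
Proof.
  intros Hjk. replace k with (j + (k - j))%nat by lia. rewrite pow_add.
  pose proof (pow_bounds j); pose proof (pow_bounds (k - j)); nra.
Qed.

Lemma geom_tail_summable (t : nat -> R) (B : R) (m : nat) : (forall n, 0 <= t n <= B) ->
  ex_series (fun j => w ^ j * t (m + j)%nat).
Proof.
  intros Ht. apply (ex_series_geom_bound _ w B Hw). intros j.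
  specialize (Ht (m + j)%nat). pose proof (pow_bounds j). split; nra.
Qed.

Lemma geom_tail_ge0 (t : nat -> R) (B : R) (m : nat) : (forall n, 0 <= t n <= B) ->
  0 <= geom_tail w t m.
Proof.
  intros Ht. apply Series_ge0; [now apply geom_tail_summable with B|].
  intros j. specialize (Ht (m + j)%nat). pose proof (pow_bounds j). nra.
Qed.

Lemma geom_tail_le (s t : nat -> R) (B : R) (m : nat) :
  (forall n, 0 <= s n <= t n) -> (forall n, t n <= B) -> geom_tail w s m <= geom_tail w t m.
Proof.
  intros Hst HtB. apply Series_le.
  - intros j. specialize (Hst (m + j)%nat). pose proof (pow_bounds j). split; nra.
  - apply geom_tail_summable with B. intros n; specialize (Hst n); specialize (HtB n); lra.
Qed.

Lemma geom_tail_plus_const (t : nat -> R) (B c : R) (m : nat) : (forall n, 0 <= t n <= B) ->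
  geom_tail w (fun n => t n + c) m = geom_tail w t m + c / (1 - w).
Proof.
  intros Ht. unfold geom_tail, Rdiv.
  rewrite <- Series_geom_pos by exact Hw.
  rewrite <- Series_scal_l, <- Series_plus.
  - apply Series_ext. intros j. ring.
  - now apply geom_tail_summable with B.
  - apply (ex_series_scal_l c (fun n => w ^ n)), ex_series_geom, Hw.
Qed.

Lemma geom_tail_le_sup (t : nat -> R) (X : R) (m : nat) : (forall n, 0 <= t n <= X) ->
  geom_tail w t m <= / (1 - w) * X.
Proof.
  intros Ht. rewrite <- Series_geom_pos, Rmult_comm, <- Series_scal_l by exact Hw.
  apply Series_le.
  - intros j. specialize (Ht (m + j)%nat). pose proof (pow_bounds j). split; nra.
  - apply (ex_series_scal_l X (fun n => w ^ n)), ex_series_geom, Hw.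
Qed.

End GeomTail.

Section GeomTailLq.

Variable w : R.
Hypothesis Hw : 0 <= w < 1.

Let u := sqrt w.

Lemma sqrt_bounds : 0 <= u < 1.
Proof.
  unfold u. split; [apply sqrt_pos|]. rewrite <- sqrt_1. apply sqrt_lt_1_alt; lra.
Qed.

(* Each [u ^ j * t_(m+j)] is at most [M := (sum_i u ^ i * t_(m+i) ^ r) ^ (1/r)], hence
   [geom_tail w t m = sum_j u ^ j * (u ^ j * t_(m+j)) <= M / (1 - u)]. *)
Lemma geom_tail_rpow_le (t : nat -> R) (B r : R) (m : nat) : 1 <= r ->
  (forall n, 0 <= t n <= B) ->
  rpow (geom_tail w t m) r <=
  rpow (/ (1 - u)) r * Series (fun i => u ^ i * rpow (t (m + i)%nat) r).
Proof.
  intros Hr Ht. pose proof sqrt_bounds as Hu.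
  assert (Hwu : forall j, w ^ j = u ^ j * u ^ j).
  { intros j. rewrite <- Rpow_mult_distr. unfold u. now rewrite sqrt_sqrt by lra. }
  assert (Htr : forall n, 0 <= rpow (t n) r <= rpow B r).
  { intros n. split; [apply rpow_ge0 | apply rpow_le; [lra | apply Ht]]. }
  assert (HexZ := geom_tail_summable u Hu _ _ m Htr).
  set (Z := Series (fun i => u ^ i * rpow (t (m + i)%nat) r)).
  assert (HZ : 0 <= Z) by exact (geom_tail_ge0 u Hu _ _ m Htr).
  set (M := rpow Z (/ r)).
  assert (Hterm : forall j, u ^ j * t (m + j)%nat <= M).
  { intros j. pose proof (pow_bounds u Hu j). specialize (Ht (m + j)%nat).
    rewrite <- (rpow_rpow_inv (u ^ j * t (m + j)%nat) r) by nra.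
    apply rpow_le; [apply Rinv_0_lt_compat; lra|]. split; [apply rpow_ge0|].
    rewrite rpow_mult_distr by lra.
    apply Rle_trans with (u ^ j * rpow (t (m + j)%nat) r).
    - apply Rmult_le_compat_r; [apply rpow_ge0 | apply rpow_le_self; lra].
    - apply (term_le_Series (fun i => u ^ i * rpow (t (m + i)%nat) r)); [exact HexZ|].
      intros i. pose proof (pow_bounds u Hu i). pose proof (Htr (m + i)%nat). nra. }
  assert (Htail : geom_tail w t m <= / (1 - u) * M).
  { unfold geom_tail. rewrite <- Series_geom_pos, Rmult_comm, <- Series_scal_l by exact Hu.
    apply Series_le.
    - intros j. rewrite Hwu. pose proof (pow_bounds u Hu j). pose proof (Ht (m + j)%nat).
      pose proof (Hterm j). split; nra.
    - apply (ex_series_scal_l M (fun n => u ^ n)), ex_series_geom, Hu. }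
  assert (Hcu : 0 < / (1 - u)) by (apply Rinv_0_lt_compat; lra).
  apply Rle_trans with (rpow (/ (1 - u) * M) r).
  - apply rpow_le; [lra|]. split; [now apply geom_tail_ge0 with B | exact Htail].
  - rewrite rpow_mult_distr by (try apply rpow_ge0; lra).
    unfold M. rewrite rpow_inv_rpow by lra. lra.
Qed.

Lemma power_sum_geom_tail_le (t : nat -> R) (B r T : R) (N : nat) : 1 <= r ->
  (forall n, 0 <= t n <= B) -> Lim_seq (power_sum r t) = Finite T ->
  power_sum r (geom_tail w t) N <= rpow (/ (1 - u)) r * / (1 - u) * T.
Proof.
  intros Hr Ht HT. pose proof sqrt_bounds as Hu.
  set (g := fun m i => u ^ i * rpow (t (m + i)%nat) r).
  assert (Hg : forall m, ex_series (g m)).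
  { intros m. apply (geom_tail_summable u Hu (fun n => rpow (t n) r) (rpow B r)). intros n.
    split; [apply rpow_ge0 | apply rpow_le; [lra | apply Ht]]. }
  unfold power_sum.
  apply Rle_trans with (sum_f_R0 (fun m => rpow (/ (1 - u)) r * Series (g m)) N).
  { apply sum_Rle. intros m _. now apply geom_tail_rpow_le with B. }
  rewrite sum_f_R0_scal_l, Rmult_assoc.
  apply Rmult_le_compat_l; [apply rpow_ge0|].
  destruct (Series_sum_f_R0_comm g N Hg) as [_ <-].
  rewrite <- Series_geom_pos, Rmult_comm, <- Series_scal_l by exact Hu.
  apply Series_le.
  - intros i. pose proof (pow_bounds u Hu i). split.
    + apply cond_pos_sum. intros m. unfold g. pose proof (rpow_ge0 (t (m + i)%nat) r). nra.
    + unfold g. rewrite sum_f_R0_scal_l, Rmult_comm. apply Rmult_le_compat_r; [lra|].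
      apply Rle_trans with (power_sum r t (N + i)).
      * apply (sum_f_R0_shift_le (fun n => rpow (t n) r)). intros; apply rpow_ge0.
      * now apply power_sum_le_Lim.
  - apply (ex_series_scal_l T (fun n => u ^ n)), ex_series_geom, Hu.
Qed.

Lemma lq_norm_finite_geom_tail_le (t : nat -> R) (B r : R) : 1 <= r ->
  (forall n, 0 <= t n <= B) ->
  Rbar_le (lq_norm r (geom_tail w t))
    (Rbar_mult (rpow (rpow (/ (1 - u)) r * / (1 - u)) (/ r)) (lq_norm r t)).
Proof.
  intros Hr Ht. pose proof sqrt_bounds as Hu.
  set (K := rpow (/ (1 - u)) r * / (1 - u)).
  assert (HK : 0 < K).
  { apply Rmult_lt_0_compat; [apply rpow_gt0|]; apply Rinv_0_lt_compat; lra. }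
  assert (Hr' : 0 < / r) by (apply Rinv_0_lt_compat; lra).
  rewrite !lq_norm_finite, <- Rbar_rpow_scal, rpow_inv_rpow
    by (try apply rpow_gt0; try apply Lim_power_sum_ge0; lra).
  apply Rbar_rpow_le; [exact Hr' | apply Lim_power_sum_ge0|].
  pose proof (Lim_power_sum_ge0 r t) as HL.
  destruct (Lim_seq (power_sum r t)) as [T| |] eqn:HT; cbn in HL; try contradiction.
  - change (Rbar_mult K T) with (Finite (K * T)).
    rewrite <- (Lim_seq_const (K * T)). apply Lim_seq_le_loc. exists 0%nat. intros N _.
    now apply power_sum_geom_tail_le with B.
  - rewrite (proj1 (Rbar_mult_infty_pos K HK)). apply Rbar_le_p_infty.
Qed.

Lemma lq_norm_p_infty_geom_tail_le (t : nat -> R) : (forall n, 0 <= t n) ->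
  Rbar_le (lq_norm p_infty (geom_tail w t)) (Rbar_mult (/ (1 - w)) (lq_norm p_infty t)).
Proof.
  intros Ht. assert (Hcw : 0 < / (1 - w)) by (apply Rinv_0_lt_compat; lra).
  rewrite !lq_norm_p_infty.
  assert (Hle : forall n, Rbar_le (t n) (Sup_seq (fun m => t m))).
  { intros n. apply Sup_seq_minor_le with n. apply Rle_refl. }
  revert Hle. destruct (Sup_seq (fun m => t m)) as [X| |]; intros Hle.
  - apply Sup_seq_le_ub. intros m. apply geom_tail_le_sup; [exact Hw|].
    intros n. split; [apply Ht | apply (Hle n)].
  - rewrite (proj1 (Rbar_mult_infty_pos _ Hcw)). apply Rbar_le_p_infty.
  - destruct (Hle 0%nat).
Qed.

Lemma lq_norm_geom_tail_le (q : Rbar) : Rbar_le 1 q ->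
  exists C, 0 < C /\ forall (t : nat -> R) (B : R), (forall n, 0 <= t n <= B) ->
    Rbar_le (lq_norm q (geom_tail w t)) (Rbar_mult C (lq_norm q t)).
Proof.
  intros Hq. pose proof sqrt_bounds as Hu.
  destruct q as [r| |]; cbn in Hq; try contradiction.
  - eexists. split; [|intros t B Ht; now apply lq_norm_finite_geom_tail_le with B].
    apply rpow_gt0, Rmult_lt_0_compat; [apply rpow_gt0|]; apply Rinv_0_lt_compat; lra.
  - exists (/ (1 - w)). split; [apply Rinv_0_lt_compat; lra|].
    intros t B Ht. apply lq_norm_p_infty_geom_tail_le. intros n; apply Ht.
Qed.

End GeomTailLq.

Lemma is_glb_Rbar_real (E : R -> Prop) (x0 lb : R) : E x0 -> (forall x, E x -> lb <= x) ->
  is_glb_Rbar E (real (Glb_Rbar E)).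
Proof.
  intros H0 Hlb. destruct (Glb_Rbar_correct E) as [Hlow Hgreat].
  pose proof (Hlow x0 H0) as Hx0. pose proof (Hgreat lb Hlb) as Hge.
  destruct (Glb_Rbar E) as [g| |]; cbn in Hx0, Hge; try contradiction.
  now split.
Qed.

Lemma is_glb_Rbar_approx (E : R -> Prop) (g eps : R) : is_glb_Rbar E g -> 0 < eps ->
  exists x, E x /\ x <= g + eps.
Proof.
  intros [_ Hgreat] Heps. apply NNPP. intros Hnone.
  assert (Hlb : is_lb_Rbar E (g + eps)).
  { intros x Ex. cbn. apply Rnot_lt_le. intros Hlt.
    apply Hnone. exists x. split; [exact Ex | lra]. }
  specialize (Hgreat _ Hlb). cbn in Hgreat. lra.
Qed.

Lemma Cdist_triangle (a b c : C) : Cmod (Cminus a c) <= Cmod (Cminus a b) + Cmod (Cminus b c).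
Proof.
  replace (Cminus a c) with (Cplus (Cminus a b) (Cminus b c)) by ring. apply Cmod_triangle.
Qed.

Lemma Cdist_comm (a b : C) : Cmod (Cminus a b) = Cmod (Cminus b a).
Proof. replace (Cminus a b) with (Copp (Cminus b a)) by ring. apply Cmod_opp. Qed.

Lemma Cdist_disk (a b : C) : in_disk a -> in_disk b -> Cmod (Cminus a b) <= 2.
Proof.
  unfold in_disk. intros Ha Hb. eapply Rle_trans; [apply Cmod_triangle|].
  rewrite Cmod_opp. lra.
Qed.

Lemma Cdist_chain (b : nat -> C) (a : nat -> R) (m : nat) : (forall i, 0 <= a i) ->
  (forall i, Cmod (Cminus (b i) (b (S i))) <= a i + a (S i)) ->
  forall k, Cmod (Cminus (b m) (b (m + k)%nat)) <=
    2 * sum_f_R0 (fun j => a (m + j)%nat) k - a (m + k)%nat.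
Proof.
  intros Ha Hstep k. induction k as [|k IH]; cbn.
  - rewrite Nat.add_0_r. replace (Cminus (b m) (b m)) with (RtoC 0) by ring.
    rewrite Cmod_0. pose proof (Ha m); lra.
  - eapply Rle_trans; [apply (Cdist_triangle _ (b (m + k)%nat))|].
    replace (m + S k)%nat with (S (m + k)) by lia. pose proof (Hstep (m + k)%nat). lra.
Qed.

Lemma periodic_mul (p : nat) (b : Z -> C) : periodic p b ->
  forall k n : Z, b (n + k * Z.of_nat p)%Z = b n.
Proof.
  intros Hb k. induction k as [|k IH|k IH] using Z.peano_ind; intros n.
  - f_equal; lia.
  - rewrite <- (IH n), <- (Hb (n + k * Z.of_nat p)%Z). f_equal; lia.
  - rewrite <- (Hb (n + Z.pred k * Z.of_nat p)%Z), <- (IH n). f_equal; lia.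
Qed.

Lemma periodic_window (p i : nat) (n : Z) : (0 < p)%nat ->
  exists k, (1 <= k <= p)%nat /\ forall b : Z -> C, periodic p b -> b n = b (Z.of_nat (i + k)).
Proof.
  intros Hp. set (r := ((n - Z.of_nat i - 1) mod Z.of_nat p)%Z).
  assert (Hr : (0 <= r < Z.of_nat p)%Z) by (apply Z.mod_pos_bound; lia).
  exists (Z.to_nat (r + 1)). split; [lia|]. intros b Hb.
  pose proof (Z_div_mod_eq_full (n - Z.of_nat i - 1) (Z.of_nat p)).
  replace n with (Z.of_nat (i + Z.to_nat (r + 1))
                  + ((n - Z.of_nat i - 1) / Z.of_nat p) * Z.of_nat p)%Z
    by (unfold r in *; lia).
  apply periodic_mul, Hb.
Qed.

Lemma dtm_ge0 (p : nat) (alpha : nat -> C) (beta : Z -> C) (m : nat) : 0 <= dtm p alpha beta m.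
Proof. apply cond_pos_sum. intros; apply Cmod_ge_0. Qed.

Lemma dtm_term_le (p : nat) (alpha : nat -> C) (beta : Z -> C) (m k : nat) : (k <= p)%nat ->
  Cmod (Cminus (alpha (m + k)%nat) (beta (Z.of_nat (m + k)))) <= dtm p alpha beta m.
Proof.
  apply (sum_f_R0_term_le (fun k => Cmod (Cminus (alpha (m + k)%nat) (beta (Z.of_nat (m + k)))))).
  intros; apply Cmod_ge_0.
Qed.

Lemma dtm_le (p : nat) (alpha : nat -> C) (beta : Z -> C) (m : nat) :
  (forall n, in_disk (alpha n)) -> (forall n, in_disk (beta n)) ->
  dtm p alpha beta m <= 2 * INR (S p).
Proof.
  intros Ha Hb. unfold dtm. rewrite <- sum_cte. apply sum_Rle. intros k _. now apply Cdist_disk.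
Qed.

Lemma periodic_Cdist_le_dtm (p : nat) (alpha : nat -> C) (b b' : Z -> C) (i : nat) (n : Z) :
  (0 < p)%nat -> periodic p b -> periodic p b' ->
  Cmod (Cminus (b n) (b' n)) <= dtm p alpha b i + dtm p alpha b' (S i).
Proof.
  intros Hp Hb Hb'. destruct (periodic_window p i n Hp) as [k [Hk Hn]].
  rewrite (Hn b Hb), (Hn b' Hb').
  eapply Rle_trans; [apply (Cdist_triangle _ (alpha (i + k)%nat))|].
  rewrite Cdist_comm. apply Rplus_le_compat; [apply dtm_term_le; lia|].
  replace (i + k)%nat with (S i + (k - 1))%nat by lia. apply dtm_term_le; lia.
Qed.

Lemma Cdist_le_sum_dtm (p : nat) (alpha : nat -> C) (bs : nat -> Z -> C) (m k : nat) :
  (0 < p)%nat -> (forall i, periodic p (bs i)) ->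
  Cmod (Cminus (alpha (m + k)%nat) (bs m (Z.of_nat (m + k)))) <=
  2 * sum_f_R0 (fun j => dtm p alpha (bs (m + j)%nat) (m + j)) k.
Proof.
  intros Hp Hper. set (n := Z.of_nat (m + k)).
  assert (Hchain := Cdist_chain (fun i => bs i n) (fun i => dtm p alpha (bs i) i) m
    (fun i => dtm_ge0 p alpha (bs i) i)
    (fun i => periodic_Cdist_le_dtm p alpha (bs i) (bs (S i)) i n Hp (Hper i) (Hper (S i))) k).
  assert (Hlast := dtm_term_le p alpha (bs (m + k)%nat) (m + k) 0 (Nat.le_0_l p)).
  rewrite Nat.add_0_r in Hlast. cbn in Hchain.
  eapply Rle_trans; [apply (Cdist_triangle _ (bs (m + k)%nat n))|].
  rewrite (Cdist_comm (bs (m + k)%nat n)). fold n in Hlast. lra.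
Qed.

Lemma exp_neg_half_bounds : 0 < exp (- / 2) < 1.
Proof. split; [apply exp_pos|]. rewrite <- exp_0. apply exp_increasing. lra. Qed.

Lemma exp_neg_INR (k : nat) : exp (- INR k) = exp (- / 2) ^ k * exp (- / 2) ^ k.
Proof.
  rewrite <- Rpow_mult_distr, <- exp_plus, <- Rpower_pow by apply exp_pos.
  unfold Rpower. rewrite ln_exp. f_equal. lra.
Qed.

Lemma dm_term_bounds (alpha : nat -> C) (beta : Z -> C) (m k : nat) :
  (forall n, in_disk (alpha n)) -> (forall n, in_disk (beta n)) ->
  0 <= exp (- INR k) * Cmod (Cminus (alpha (m + k)%nat) (beta (Z.of_nat (m + k)))) <=
  2 * exp (- / 2) ^ k.
Proof.
  intros Ha Hb.
  pose proof (Cdist_disk _ _ (Ha (m + k)%nat) (Hb (Z.of_nat (m + k)))).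
  pose proof (Cmod_ge_0 (Cminus (alpha (m + k)%nat) (beta (Z.of_nat (m + k))))).
  assert (Hw : 0 <= exp (- / 2) < 1) by (pose proof exp_neg_half_bounds; lra).
  pose proof (pow_bounds _ Hw k).
  rewrite exp_neg_INR. split; nra.
Qed.

Lemma dm_summable (alpha : nat -> C) (beta : Z -> C) (m : nat) :
  (forall n, in_disk (alpha n)) -> (forall n, in_disk (beta n)) ->
  ex_series (fun k => exp (- INR k) * Cmod (Cminus (alpha (m + k)%nat) (beta (Z.of_nat (m + k))))).
Proof.
  intros Ha Hb. apply (ex_series_geom_bound _ (exp (- / 2)) 2).
  - pose proof exp_neg_half_bounds; lra.
  - intros k. now apply dm_term_bounds.
Qed.

Lemma dm_ge0 (alpha : nat -> C) (beta : Z -> C) (m : nat) :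
  (forall n, in_disk (alpha n)) -> (forall n, in_disk (beta n)) -> 0 <= dm alpha beta m.
Proof.
  intros Ha Hb. apply Series_ge0; [now apply dm_summable|].
  intros k. now apply dm_term_bounds.
Qed.

Lemma dm_ge_dtm (p : nat) (alpha : nat -> C) (beta : Z -> C) (m : nat) :
  (forall n, in_disk (alpha n)) -> (forall n, in_disk (beta n)) ->
  exp (- INR p) * dtm p alpha beta m <= dm alpha beta m.
Proof.
  intros Ha Hb. unfold dtm, dm. rewrite scal_sum.
  apply Rle_trans with (sum_f_R0 (fun k => exp (- INR k) *
    Cmod (Cminus (alpha (m + k)%nat) (beta (Z.of_nat (m + k))))) p).
  - apply sum_Rle. intros k Hk. rewrite Rmult_comm.
    apply Rmult_le_compat_r; [apply Cmod_ge_0|].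
    apply exp_le_exp, Ropp_le_contravar, le_INR, Hk.
  - apply sum_f_R0_le_Series; [now apply dm_summable|].
    intros k. now apply dm_term_bounds.
Qed.

Lemma Series_exp_partial_sums_le (x a : nat -> R) (B c : R) (m : nat) :
  0 <= c -> (forall n, 0 <= a n <= B) ->
  (forall k, 0 <= x k <= c * sum_f_R0 (fun j => a (m + j)%nat) k) ->
  Series (fun k => exp (- INR k) * x k) <=
  c / (1 - exp (- / 2)) * geom_tail (exp (- / 2)) a m.
Proof.
  intros Hc Ha Hx. set (w := exp (- / 2)).
  assert (Hw : 0 <= w < 1) by (pose proof exp_neg_half_bounds; unfold w; lra).
  set (U := geom_tail w a m).
  assert (Hpartial : forall k, w ^ k * sum_f_R0 (fun j => a (m + j)%nat) k <= U).
  { intros k. rewrite scal_sum.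
    apply Rle_trans with (sum_f_R0 (fun j => w ^ j * a (m + j)%nat) k).
    - apply sum_Rle. intros j Hj. rewrite Rmult_comm.
      apply Rmult_le_compat_r; [apply Ha | now apply pow_decr].
    - apply sum_f_R0_le_Series; [now apply geom_tail_summable with B|].
      intros j. pose proof (pow_bounds w Hw j). pose proof (Ha (m + j)%nat). nra. }
  unfold Rdiv. rewrite <- Series_geom_pos, Rmult_assoc, (Rmult_comm _ U), <- Rmult_assoc,
    <- Series_scal_l by exact Hw.
  apply Series_le.
  - intros k. rewrite exp_neg_INR. fold w.
    pose proof (pow_bounds w Hw k) as Hwk. pose proof (Hx k) as Hxk.
    assert (w ^ k * x k <= c * U) by (pose proof (Hpartial k); nra).
    split; nra.
  - apply (ex_series_scal_l (c * U) (fun n => w ^ n)), ex_series_geom, Hw.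
Qed.

Section Torus.

Variables (p : nat) (alpha0 : Z -> C) (alpha : nat -> C).
Hypotheses (Hper0 : periodic p alpha0) (Hdisk0 : forall n, in_disk (alpha0 n))
  (Hdisk : forall n, in_disk (alpha n)).

Lemma iso_torus_refl : iso_torus p alpha0 alpha0.
Proof. repeat split; auto. Qed.

Lemma dtm_torus_glb (m : nat) :
  is_glb_Rbar (fun x => exists beta, iso_torus p alpha0 beta /\ x = dtm p alpha beta m)
    (dtm_torus p alpha0 alpha m).
Proof.
  apply (is_glb_Rbar_real _ (dtm p alpha alpha0 m) 0).
  - exists alpha0. split; [exact iso_torus_refl | reflexivity].
  - intros x [beta [_ ->]]. apply dtm_ge0.
Qed.

Lemma dm_torus_glb (m : nat) :
  is_glb_Rbar (fun x => exists beta, iso_torus p alpha0 beta /\ x = dm alpha beta m)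
    (dm_torus p alpha0 alpha m).
Proof.
  apply (is_glb_Rbar_real _ (dm alpha alpha0 m) 0).
  - exists alpha0. split; [exact iso_torus_refl | reflexivity].
  - intros x [beta [[_ [Hbeta _]] ->]]. now apply dm_ge0.
Qed.

Lemma dtm_torus_bounds (m : nat) : 0 <= dtm_torus p alpha0 alpha m <= 2 * INR (S p).
Proof.
  destruct (dtm_torus_glb m) as [Hlow Hgreat]. split.
  - apply (Hgreat 0). intros x [beta [_ ->]]. apply dtm_ge0.
  - apply Rle_trans with (dtm p alpha alpha0 m); [|now apply dtm_le].
    apply Hlow. exists alpha0. split; [exact iso_torus_refl | reflexivity].
Qed.

Lemma dm_torus_ge_dtm_torus (m : nat) :
  exp (- INR p) * dtm_torus p alpha0 alpha m <= dm_torus p alpha0 alpha m.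
Proof.
  destruct (dm_torus_glb m) as [_ Hgreat]. apply (Hgreat (exp (- INR p) * _)).
  intros x [beta [Hbeta ->]]. cbn.
  apply Rle_trans with (exp (- INR p) * dtm p alpha beta m).
  - apply Rmult_le_compat_l; [left; apply exp_pos|].
    apply (proj1 (dtm_torus_glb m)). now exists beta.
  - apply dm_ge_dtm; [exact Hdisk | apply Hbeta].
Qed.

Lemma dtm_torus_near_minimizers (eps : R) : 0 < eps ->
  exists bs : nat -> Z -> C, forall i,
    iso_torus p alpha0 (bs i) /\ dtm p alpha (bs i) i <= dtm_torus p alpha0 alpha i + eps.
Proof.
  intros Heps. apply (functional_choice (fun i b =>
    iso_torus p alpha0 b /\ dtm p alpha b i <= dtm_torus p alpha0 alpha i + eps)).
  intros i. destruct (is_glb_Rbar_approx _ _ eps (dtm_torus_glb i) Heps) as [x [[b [Hb ->]] Hx]].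
  now exists b.
Qed.

Lemma dm_torus_le_geom_tail (m : nat) : (0 < p)%nat ->
  dm_torus p alpha0 alpha m <=
  2 / (1 - exp (- / 2)) * geom_tail (exp (- / 2)) (dtm_torus p alpha0 alpha) m.
Proof.
  intros Hp. set (w := exp (- / 2)). set (t := dtm_torus p alpha0 alpha).
  assert (Hw : 0 < w < 1) by exact exp_neg_half_bounds.
  assert (Hcw : 0 < / (1 - w)) by (apply Rinv_0_lt_compat; lra).
  assert (Ht : forall n, 0 <= t n <= 2 * INR (S p)) by exact dtm_torus_bounds.
  apply Rle_plus_epsilon. intros eps Heps.
  set (delta := eps * (1 - w) * (1 - w) / 2).
  assert (Hdelta : 0 < delta)
    by (unfold delta; apply Rdiv_lt_0_compat; [repeat apply Rmult_lt_0_compat | ]; lra).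
  destruct (dtm_torus_near_minimizers delta Hdelta) as [bs Hbs].
  set (a := fun i => dtm p alpha (bs i) i).
  assert (Ha : forall n, 0 <= a n <= t n + delta).
  { intros n. split; [apply dtm_ge0 | apply Hbs]. }
  apply Rle_trans with (dm alpha (bs m) m).
  { apply (proj1 (dm_torus_glb m)). exists (bs m). split; [apply Hbs | reflexivity]. }
  apply Rle_trans with (2 / (1 - w) * geom_tail w a m).
  { apply (Series_exp_partial_sums_le _ a (2 * INR (S p)) 2 m); [lra | |].
    - intros n. split; [apply dtm_ge0 | apply dtm_le; [exact Hdisk | apply Hbs]].
    - intros k. split; [apply Cmod_ge_0|].
      apply Cdist_le_sum_dtm; [exact Hp | intros i; apply Hbs]. }
  apply Rle_trans with (2 / (1 - w) * geom_tail w (fun n => t n + delta) m).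
  { apply Rmult_le_compat_l; [unfold Rdiv; lra|].
    apply (geom_tail_le w ltac:(lra) _ _ (2 * INR (S p) + delta)); [exact Ha|].
    intros n. pose proof (Ht n). lra. }
  rewrite (geom_tail_plus_const w ltac:(lra) t (2 * INR (S p))) by exact Ht.
  right. unfold delta. field. lra.
Qed.

End Torus.

Theorem proposition4p6 (p : nat) (alpha0 : Z -> C) (q : Rbar) :
  Nat.Even p -> (0 < p)%nat ->
  periodic p alpha0 -> (forall n, in_disk (alpha0 n)) ->
  Rbar_le (Finite 1) q ->
  exists Cst : R, 0 < Cst /\
    forall alpha : nat -> C, (forall n, in_disk (alpha n)) ->
      Rbar_le (Rbar_mult (Finite (exp (- INR p))) (lq_norm q (dtm_torus p alpha0 alpha)))
              (lq_norm q (dm_torus p alpha0 alpha)) /\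
      Rbar_le (lq_norm q (dm_torus p alpha0 alpha))
              (Rbar_mult (Finite Cst) (lq_norm q (dtm_torus p alpha0 alpha))).
Proof.
  intros _ Hp Hper0 Hdisk0 Hq.
  set (w := exp (- / 2)).
  assert (Hw : 0 < w < 1) by exact exp_neg_half_bounds.
  assert (HK : 0 < 2 / (1 - w)) by (apply Rdiv_lt_0_compat; lra).
  destruct (lq_norm_geom_tail_le w ltac:(lra) q Hq) as [C [HC Hyoung]].
  exists (2 / (1 - w) * C). split; [nra|].
  intros alpha Hdisk. set (t := dtm_torus p alpha0 alpha).
  assert (Ht : forall m, 0 <= t m <= 2 * INR (S p)) by now apply dtm_torus_bounds.
  assert (Hlow : forall m, 0 <= exp (- INR p) * t m <= dm_torus p alpha0 alpha m).
  { intros m. split; [apply Rmult_le_pos; [left; apply exp_pos | apply Ht]|].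
    now apply dm_torus_ge_dtm_torus. }
  assert (HG : forall m, 0 <= geom_tail w t m).
  { intros m. apply (geom_tail_ge0 w ltac:(lra) t (2 * INR (S p))), Ht. }
  split.
  - rewrite <- lq_norm_scal by (try apply exp_pos; auto; intros m; apply Ht).
    now apply lq_norm_le.
  - apply Rbar_le_trans with (lq_norm q (fun m => 2 / (1 - w) * geom_tail w t m)).
    { apply lq_norm_le; [exact Hq|]. intros m. split.
      - apply Rle_trans with (exp (- INR p) * t m); apply Hlow.
      - now apply dm_torus_le_geom_tail. }
    rewrite lq_norm_scal, <- Rbar_mult_assoc_pos by assumption.
    apply Rbar_mult_le_compat_l_pos; [exact HK|].
    now apply Hyoung with (2 * INR (S p)).
Qed.
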